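(* Let $P$ be a prior distribution over $\mathcal F$, let $c>0$, $h\in(0,1]$, and $c_2$ with $0<c_2<h^2c$. Let $\kappa>0$, $\delta\in(0,1)$, $m\ge1$ and $\lambda>0$ with $$\frac{\lambda}{m}\le\min\Big(\frac{h^2c-c_2}{2(1+h^2c)(1+c_2)},\;\frac{4c_2h^2}{(1+c_2)(1+c_2h^2)}\Big(\kappa+\log\frac4\delta\Big)\Big).$$ Then with probability at least $1-\delta$ over $S=(z_1,\dots,z_m)\sim\mathcal D^m$, $$\sup_{Q:\ \mathrm{KL}(Q\|P)\le\kappa}\Big[\mathcal L_{\mathcal D}(Q)-\hat{\mathcal L}_S(Q)-\frac{c}{m}\sum_{i=1}^m\mathbb E_{f\sim Q}\big[f(z_i)-(1+h)\ell_Q(z_i)\big]^2\Big]\le\frac{4}{\lambda}\Big(\kappa+\log\frac4\delta\Big).$$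
   Context: Let $(\mathcal Z,\Sigma)$ be a measurable space and $\mathcal D$ a probability distribution on $\mathcal Z$. Let $\mathcal F$ be a class of measurable functions $f:\mathcal Z\to\{0,1\}$, equipped with a $\sigma$-algebra for which $(f,z)\mapsto f(z)$ is jointly measurable; ''distributions over $\mathcal F$'' are probability measures on it. $S=(z_1,\dots,z_m)\sim\mathcal D^m$ is an i.i.d. sample. For a distribution $Q$ over $\mathcal F$: $\ell_Q(z)=\mathbb E_{f\sim Q}f(z)$, $\mathcal L_{\mathcal D}(Q)=\mathbb E_{f\sim Q}\mathbb E_{z\sim\mathcal D}f(z)$, $\hat{\mathcal L}_S(Q)=\frac1m\sum_{i=1}^m\ell_Q(z_i)$. $\mathrm{KL}(Q\|P)$ is the relative entropy ($+\infty$ unless $Q\ll P$). The prior $P$ does not depend on $S$. The supremum is assumed measurable (or the probability is understood as outer probability). *)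

From HB Require Import structures.
From mathcomp Require Import all_boot all_order all_algebra.
From mathcomp Require Import all_classical all_reals all_analysis.
Set Implicit Arguments.
Unset Strict Implicit.
Unset Printing Implicit Defensive.
Import Order.TTheory GRing.Theory Num.Theory.
Local Open Scope classical_set_scope.
Local Open Scope ring_scope.

Definition is_density {dF} {F : measurableType dF} {R : realType}
  (P Q : probability F R) (g : F -> R) : Prop :=
  [/\ measurable_fun [set: F] g, (forall f, 0 <= g f) &
      forall A, measurable A -> Q A = (\int[P]_(f in A) (g f)%:E)%E].

(* Relative entropy KL(Q || P) = \int (dQ/dP) log (dQ/dP) dP if Q << P
   (i.e. a density exists), and +oo otherwise (infimum of the empty set).
   All densities agree P-a.e., so the infimum is the common value. *)
Definition KL {dF} {F : measurableType dF} {R : realType}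
  (Q P : probability F R) : \bar R :=
  ereal_inf [set (\int[P]_f (g f * ln (g f))%:E)%E | g in is_density P Q].

Definition ellQ {dF dZ} {F : measurableType dF} {Z : measurableType dZ}
  {R : realType} (ev : F -> Z -> R) (Q : probability F R) (z : Z) : R :=
  fine (\int[Q]_f (ev f z)%:E)%E.

Definition LD {dF dZ} {F : measurableType dF} {Z : measurableType dZ}
  {R : realType} (ev : F -> Z -> R) (D : probability Z R)
  (Q : probability F R) : R :=
  fine (\int[Q]_f \int[D]_z (ev f z)%:E)%E.

Definition Lhat {dF dZ} {F : measurableType dF} {Z : measurableType dZ}
  {R : realType} (ev : F -> Z -> R) (m : nat) (Q : probability F R)
  (S : 'I_m -> Z) : R :=
  (\sum_(i < m) ellQ ev Q (S i)) / m%:R.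

Definition varterm {dF dZ} {F : measurableType dF} {Z : measurableType dZ}
  {R : realType} (ev : F -> Z -> R) (h : R) (Q : probability F R) (z : Z) : R :=
  fine (\int[Q]_f ((ev f z - (1 + h) * ellQ ev Q z) ^+ 2)%:E)%E.

Definition iid_sample {dO dZ} {Omega : measurableType dO}
  {Z : measurableType dZ} {R : realType} (Pr : probability Omega R)
  (D : probability Z R) (m : nat) (X : 'I_m -> Omega -> Z) : Prop :=
  (forall i, measurable_fun [set: Omega] (X i)) /\
  forall A : 'I_m -> set Z, (forall i, measurable (A i)) ->
    Pr [set w | forall i, A i (X i w)] = (\prod_(i < m) D (A i))%E.

From HB Require Import structures.
From mathcomp Require Import all_boot all_order all_algebra.
From mathcomp Require Import all_classical all_reals all_analysis.
From mathcomp Require Import measurable_realfun ring lra.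
Set Implicit Arguments.
Unset Strict Implicit.
Unset Printing Implicit Defensive.
Import Order.TTheory GRing.Theory Num.Theory.
Local Open Scope classical_set_scope.
Local Open Scope ring_scope.

(* Write S = (z_1, ..., z_m), t = lambda / m, b = h^2 c, k = t (1 + b) and
   phi_S(f) = lambda * risk f - k * sum_i f(z_i).  For a fixed f the losses
   f(z_i) are i.i.d. Bernoulli(risk f), and t (1 + b) <= b (the first
   constraint on lambda / m) makes E_S exp(phi_S(f)) <= 1.  By Tonelli,
   E_S E_{f ~ P} exp(phi_S(f)) <= 1 as well, so by Markov
   E_{f ~ P} exp(phi_S(f)) <= 1/delta with probability at least 1 - delta.
   On that event the Donsker-Varadhan change of measure gives
   lambda L_D(Q) - k sum_i l_Q(z_i) <= kappa - ln delta for every Q with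
   KL(Q||P) <= kappa.  Finally, for a {0,1}-valued loss the variance term is at
   least h^2 l_Q(z_i), so the h^2 c part of k is paid by the variance penalty. *)

Section probability_integral.
Context {d : measure_display} {T : measurableType d} {R : realType}.
Variable mu : probability T R.

Lemma integrable_bounded (f : T -> R) (M : R) : measurable_fun [set: T] f ->
  (forall x, `|f x| <= M) -> mu.-integrable [set: T] (EFin \o f).
Proof.
move=> mf fM; apply: measurable_bounded_integrable => //.
  by rewrite ltey_eq fin_num_measure.
exists M; split; first by rewrite num_real.
by move=> y /ltW My x _; exact: le_trans My.
Qed.

Lemma integrable01 (f : T -> R) : measurable_fun [set: T] f ->
  (forall x, 0 <= f x <= 1) -> mu.-integrable [set: T] (EFin \o f).
Proof.
move=> mf f01; apply: (@integrable_bounded _ 1) => // x.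
by have /andP[f0 f1] := f01 x; rewrite ger0_norm.
Qed.

Lemma integral01_Rintegral (f : T -> R) : measurable_fun [set: T] f ->
  (forall x, 0 <= f x <= 1) -> (\int[mu]_x (f x)%:E = (\int[mu]_x f x)%:E)%E.
Proof.
move=> mf f01; rewrite fineK//.
by apply: integrable_fin_num => //; exact: integrable01.
Qed.

Lemma Rintegral01 (f : T -> R) : measurable_fun [set: T] f ->
  (forall x, 0 <= f x <= 1) -> 0 <= \int[mu]_x f x <= 1.
Proof.
move=> mf f01; rewrite Rintegral_ge0 => [|x _]; last by case/andP: (f01 x).
have <- : \int[mu]_(x in [set: T]) (1 : R) = 1.
  by rewrite Rintegral_cst//= probability_setT mul1r.
apply: le_Rintegral => //; first exact: integrable01.
  by apply: integrable01 => // x; rewrite lexx ler01.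
by move=> x _; case/andP: (f01 x).
Qed.

Lemma integral_onem (f : T -> R) : measurable_fun [set: T] f ->
  (forall x, 0 <= f x <= 1) ->
  (\int[mu]_x (1 - f x)%:E = (1 - \int[mu]_x f x)%:E)%E.
Proof.
move=> mf f01; rewrite integral01_Rintegral; first last.
- by move=> x; have /andP[? ?] := f01 x; apply/andP; split; lra.
- exact: measurable_funB.
rewrite RintegralB//; [|exact: finite_measure_integrable_cst|exact: integrable01].
by rewrite Rintegral_cst//= probability_setT mul1r.
Qed.

Lemma integralDr_cst (f : T -> R) (a : R) : 0 <= a ->
  measurable_fun [set: T] f -> (forall x, - a <= f x) ->
  (\int[mu]_x (f x + a)%:E = \int[mu]_x (f x)%:E + a%:E)%E.
Proof.
move=> a0 mf fa.
pose fp x := Num.max (f x) 0; pose fn x := Num.max (- f x) 0.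
have mfn : measurable_fun [set: T] fn.
  by apply: measurable_maxr => //; exact: measurableT_comp.
have fn0 x : 0 <= fn x by rewrite le_max lexx orbT.
have fna x : fn x <= a by rewrite ge_max a0 andbT lerNl.
have ifn : mu.-integrable [set: T] (EFin \o fn).
  by apply: (@integrable_bounded _ a) => // x; rewrite ger0_norm.
have -> : (\int[mu]_x (f x)%:E = \int[mu]_x (fp x)%:E - \int[mu]_x (fn x)%:E)%E.
  rewrite integralE; congr (_ - _)%E; apply: eq_integral => x _.
    by rewrite funeposE EFin_max.
  by rewrite funenegE EFin_max EFinN.
have -> : (\int[mu]_x (f x + a)%:E = \int[mu]_x ((fp x)%:E + (a - fn x)%:E))%E.
  apply: eq_integral => x _; rewrite -EFinD; congr (_%:E).
  by rewrite /fp /fn; case: (lerP 0 (f x)); case: (lerP 0 (- f x)); lra.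
rewrite ge0_integralD//; first last.
- by apply/measurable_EFinP; exact: measurable_funB.
- by move=> x _; rewrite lee_fin subr_ge0.
- by apply/measurable_EFinP; exact: measurable_maxr.
- by move=> x _; rewrite lee_fin le_max lexx orbT.
under [X in (_ + X)%E]eq_integral do rewrite EFinB.
rewrite integralB_EFin//; last exact: finite_measure_integrable_cst.
by rewrite integral_cst//= probability_setT mule1 addeCA addeC.
Qed.

End probability_integral.

Lemma ge0_integralD3 {d : measure_display} {T : measurableType d} {R : realType}
    (mu : {measure set T -> \bar R}) (f1 f2 f3 : T -> R) :
  measurable_fun [set: T] f1 -> measurable_fun [set: T] f2 ->
  measurable_fun [set: T] f3 ->
  (forall x, 0 <= f1 x) -> (forall x, 0 <= f2 x) -> (forall x, 0 <= f3 x) ->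
  (\int[mu]_x (f1 x + f2 x + f3 x)%:E =
   \int[mu]_x (f1 x)%:E + \int[mu]_x (f2 x)%:E + \int[mu]_x (f3 x)%:E)%E.
Proof.
move=> m1 m2 m3 p1 p2 p3.
have mE f : measurable_fun [set: T] f -> measurable_fun [set: T] (EFin \o f).
  by move=> mf; exact/measurable_EFinP.
under eq_integral do rewrite !EFinD.
rewrite ge0_integralD//; [|by move=> x _; rewrite adde_ge0 ?lee_fin|
  by apply: emeasurable_funD; exact: mE|by move=> x _; rewrite lee_fin|
  exact: mE].
by rewrite ge0_integralD//; [move=> x _; rewrite lee_fin|exact: mE|
  move=> x _; rewrite lee_fin|exact: mE].
Qed.

Section density.
Context {dF : measure_display} {F : measurableType dF} {R : realType}.
Variables (P Q : probability F R) (g : F -> R).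
Hypothesis hg : is_density P Q g.

Lemma density_abs_cont : Q `<< P.
Proof.
apply/null_content_dominatesP => A mA PA0; case: hg => mg _ ->//.
by apply: null_set_integral => //; exact/measurable_EFinP/measurable_funTS.
Qed.

Lemma ae_eq_density :
  ae_eq P [set: F] (Radon_Nikodym_SigmaFinite.f Q P) (EFin \o g).
Proof.
case: hg => mg _ gQ; apply: integral_ae_eq => //.
- exact: Radon_Nikodym_SigmaFinite.f_integrable density_abs_cont.
- exact/measurable_EFinP.
move=> A _ mA; rewrite -gQ//.
exact/esym/(Radon_Nikodym_SigmaFinite.f_integral density_abs_cont).
Qed.

Lemma integral_density (f : F -> \bar R) : (forall x, (0 <= f x)%E) ->
    measurable_fun [set: F] f ->
  (\int[P]_x (f x * (g x)%:E) = \int[Q]_x f x)%E.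
Proof.
move=> f0 mf; case: hg => mg _ _.
rewrite -(Radon_Nikodym_SigmaFinite.change_of_variables density_abs_cont f0
  measurableT mf).
apply: ae_eq_integral => //.
- exact/emeasurable_funM/measurable_EFinP.
- apply: emeasurable_funM => //.
  exact: measurable_int (Radon_Nikodym_SigmaFinite.f_integrable density_abs_cont).
- by apply: filterS ae_eq_density => x /[apply] /= ->.
Qed.

End density.

Lemma young_expR (R : realType) (u v : R) :
  0 <= u -> u * v <= u * ln u - u + expR v.
Proof.
rewrite le_eqVlt => /predU1P[<-|u0]; first by rewrite !mul0r subr0 add0r expR_ge0.
have := expR_ge1Dx (v - ln u); rewrite expRD expRN lnK ?posrE//.
rewrite -(ler_pM2l u0) mulrCA mulfV ?gt_eqF// mulr1; nra.
Qed.

Lemma xlnx_ge_N1 (R : realType) (u : R) : 0 <= u -> -1 <= u * ln u.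
Proof. by move=> u0; have := young_expR 0 u0; rewrite mulr0 expR0; lra. Qed.

(* Young's inequality at [v - ln B], with [u + 1] added on both sides so that,
   by [xlnx_ge_N1], both sides are nonnegative. *)
Lemma young_expR_shift (R : realType) (u v B : R) : 0 <= u -> 0 < B ->
  u * v + u + 1 <= (u * ln u + 1) + B^-1 * expR v + u * ln B.
Proof.
move=> u0 B0; have := young_expR (v - ln B) u0.
by rewrite expRD expRN lnK ?posrE// mulrBr; lra.
Qed.

Section donsker_varadhan.
Context {dF : measure_display} {F : measurableType dF} {R : realType}.
Variables (P Q : probability F R) (psi : F -> R) (B : R).
Hypotheses (mpsi : measurable_fun [set: F] psi) (psi0 : forall f, 0 <= psi f).
Hypothesis hB : (\int[P]_f (expR (psi f))%:E = B%:E)%E.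

Let integral_one : (\int[P]_f 1%:E = 1)%E.
Proof. by rewrite integral_cst//= probability_setT mul1e. Qed.

Let mexpR_psi : measurable_fun [set: F] (fun f => expR (psi f)).
Proof. exact: measurableT_comp. Qed.

Lemma integral_expR_ge1 : 1 <= B.
Proof.
rewrite -lee_fin -hB -integral_one.
apply: ge0_le_integral => //; first exact/measurable_EFinP.
by move=> f _; rewrite lee_fin -expR0 ler_expR.
Qed.

Lemma density_donsker_varadhan (g : F -> R) : is_density P Q g ->
  (\int[Q]_f (psi f)%:E <= \int[P]_f (g f * ln (g f))%:E + (ln B)%:E)%E.
Proof.
move=> hg; case: (hg) => mg g0 gQ.
have B1 := integral_expR_ge1; have B0 : 0 < B by exact: lt_le_trans ltr01 B1.
have lnB0 : 0 <= ln B by rewrite ln_ge0.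
have mglng : measurable_fun [set: F] (fun f => g f * ln (g f)).
  exact: measurable_funM mg (measurableT_comp (@measurable_ln R) mg).
have int_g : (\int[P]_f (g f)%:E = 1)%E by rewrite -gQ// probability_setT.
have lhs : (\int[P]_f (g f * psi f + g f + 1)%:E =
    \int[Q]_f (psi f)%:E + 1 + 1)%E.
  rewrite (ge0_integralD3 _ (measurable_funM mg mpsi) mg (measurable_cst _)
    (fun f => mulr_ge0 (g0 f) (psi0 f)) g0 (fun=> ler01)).
  rewrite int_g integral_one -(integral_density hg); last 2 first.
  - by move=> f; rewrite lee_fin.
  - exact/measurable_EFinP.
  by congr (_ + _ + _)%E; apply: eq_integral => x _; rewrite -EFinM mulrC.
have rhs : (\int[P]_f
      ((g f * ln (g f) + 1) + B^-1 * expR (psi f) + g f * ln B)%:E =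
    \int[P]_f (g f * ln (g f))%:E + 1 + 1 + (ln B)%:E)%E.
  have glng0 f : 0 <= g f * ln (g f) + 1.
    by have := xlnx_ge_N1 (g0 f); lra.
  have Bexp0 f : 0 <= B^-1 * expR (psi f).
    by rewrite mulr_ge0 ?expR_ge0 ?invr_ge0 ?ltW.
  rewrite (ge0_integralD3 _ (measurable_funD mglng (measurable_cst _))
    (measurable_funM (measurable_cst _) mexpR_psi)
    (measurable_funM mg (measurable_cst _))
    glng0 Bexp0 (fun f => mulr_ge0 (g0 f) lnB0)).
  rewrite integralDr_cst//= => [|f]; last exact: xlnx_ge_N1.
  under [X in (_ + X + _)%E]eq_integral do rewrite EFinM.
  under [X in (_ + X)%E]eq_integral do rewrite mulrC EFinM.
  have Binv0 : 0 <= B^-1 by rewrite invr_ge0 ltW.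
  rewrite !ge0_integralZl_EFin//; [|by move=> f _; rewrite lee_fin|
    exact/measurable_EFinP|exact/measurable_EFinP].
  by rewrite hB int_g -EFinM mulVf ?gt_eqF// mule1.
have : (\int[P]_f (g f * psi f + g f + 1)%:E <=
    \int[P]_f ((g f * ln (g f) + 1) + B^-1 * expR (psi f) + g f * ln B)%:E)%E.
  apply: ge0_le_integral => //.
  - by move=> f _; rewrite lee_fin !addr_ge0 ?mulr_ge0.
  - apply/measurable_EFinP.
    exact: measurable_funD (measurable_funD (measurable_funM mg mpsi) mg) _.
  - apply/measurable_EFinP; apply: measurable_funD; last exact: measurable_funM.
    exact: measurable_funD (measurable_funD mglng _)
      (measurable_funM _ mexpR_psi).
  - by move=> f _; rewrite lee_fin young_expR_shift.
by rewrite lhs rhs !(addeAC _ 1%E (ln B)%:E) !leeD2rE.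
Qed.

Lemma donsker_varadhan : (\int[Q]_f (psi f)%:E - (ln B)%:E <= KL Q P)%E.
Proof.
apply/ereal_infP => _ [g hg <-].
by rewrite leeBlDr//; exact: density_donsker_varadhan.
Qed.

End donsker_varadhan.

Section markov_tonelli.
Context {dF dO : measure_display} {F : measurableType dF}
  {Omega : measurableType dO} {R : realType}.
Variables (P : probability F R) (Pr : probability Omega R).

Lemma markov_sublevel (H : Omega -> \bar R) (delta : R) : 0 < delta ->
  measurable_fun [set: Omega] H -> (forall w, (0 <= H w)%E) ->
  (\int[Pr]_w H w <= 1)%E ->
  measurable [set w | (H w <= delta^-1%:E)%E] /\
  ((1 - delta)%:E <= Pr [set w | (H w <= delta^-1%:E)%E])%E.
Proof.
move=> d0 mH H0 intH; set E := [set w | _].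
have mE : measurable E.
  rewrite -[X in measurable X]setTI.
  exact: (measurable_lee measurableT mH (measurable_cst _)).
split=> //.
have mCE : measurable (~` E) by exact: measurableC.
have : (delta^-1%:E * Pr (~` E) <= 1)%E.
  apply: le_trans intH; apply: (@le_trans _ _ (\int[Pr]_(w in ~` E) H w)%E).
    rewrite -integral_cst//; apply: ge0_le_integral => //.
    - by move=> w _; rewrite lee_fin invr_ge0 ltW.
    - exact: measurable_funTS.
    - by move=> w /= /negP; rewrite -ltNge => /ltW.
  exact: ge0_subset_integral.
rewrite probability_setC// -(fineK (fin_num_measure _ _ mE)) -EFinB -EFinM.
rewrite lee_fin -(ler_pM2l d0) mulrA mulfV ?gt_eqF// mul1r mulr1 lee_fin; lra.
Qed.

Variable G : F * Omega -> \bar R.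
Hypotheses (mG : measurable_fun [set: F * Omega] G) (G0 : forall q, (0 <= G q)%E).

Lemma tonelli_markov (delta : R) : 0 < delta ->
  (forall f, (\int[Pr]_w G (f, w) <= 1)%E) ->
  exists E : set Omega, [/\ measurable E, ((1 - delta)%:E <= Pr E)%E &
    forall w, E w -> (\int[P]_f G (f, w) <= delta^-1%:E)%E].
Proof.
move=> d0 G_le1.
have mH := measurable_fun_fubini_tonelli_G (m1 := P) G mG G0.
have H0 w : (0 <= \int[P]_f G (f, w))%E by exact: integral_ge0.
have intH : (\int[Pr]_w \int[P]_f G (f, w) <= 1)%E.
  rewrite -(fubini_tonelli2 (m1 := P) (m2 := Pr) G mG G0).
  rewrite (fubini_tonelli1 (m1 := P) (m2 := Pr) G mG G0).
  have <- : (\int[P]_f (cst 1%E) f = 1)%E.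
    by rewrite integral_cst//= probability_setT mul1e.
  apply: ge0_le_integral => //.
  - by move=> f _; exact: integral_ge0.
  - exact: measurable_fun_fubini_tonelli_F.
  - by move=> f _; exact: G_le1.
have [mE PrE] := markov_sublevel d0 mH H0 intH.
by exists [set w | (\int[P]_f G (f, w) <= delta^-1%:E)%E].
Qed.
End markov_tonelli.

Section iid_sample_two_valued.
Context {dO dZ : measure_display} {Omega : measurableType dO}
  {Z : measurableType dZ} {R : realType}.
Variables (Pr : probability Omega R) (D : probability Z R) (m : nat)
  (X : 'I_m -> Omega -> Z).
Hypothesis hX : iid_sample Pr D X.

Let pattern_event (A : set Z) (s : {ffun 'I_m -> bool}) :=
  [set w | forall i, (if s i then A else ~` A) (X i w)].

Let measurable_pattern_event A s : measurable A -> measurable (pattern_event A s).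
Proof.
move=> mA; have -> : pattern_event A s =
    \bigcap_(i in [set: 'I_m]) (X i @^-1` (if s i then A else ~` A)).
  by apply/seteqP; split => w /=; [move=> H i _; exact: H | move=> H i; exact: H].
apply: fin_bigcap_measurable; first exact: finite_finset.
move=> i _; rewrite -[X in measurable X]setTI; apply: (hX.1 i) => //.
by case: (s i) => //; exact: measurableC.
Qed.

Let prod_indic (B : 'I_m -> set Z) w :
  \prod_(i < m) (\1_(B i) (X i w) : R) = \1_[set w | forall i, B i (X i w)] w.
Proof.
have [HB|] := pselect (forall i, B i (X i w)).
  by rewrite indicE mem_set// big1// => i _; rewrite indicE mem_set.
move=> /existsNP[i Bi].
by rewrite indicE memNset// (bigD1 i)//= indicE memNset// mul0r.
Qed.

Lemma iid_integral_prod_indic (A : set Z) (r s : R) :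
  measurable A -> 0 <= r -> 0 <= s ->
  (\int[Pr]_w (\prod_(i < m) (r * \1_A (X i w) + s * \1_(~` A) (X i w)))%:E =
   ((r * fine (D A) + s * fine (D (~` A))) ^+ m)%:E)%E.
Proof.
move=> mA r0 s0.
pose c (j : bool) := if j then r else s.
pose p (j : bool) := fine (D (if j then A else ~` A)).
have c0 j : 0 <= c j by case: j.
have expand w : \prod_(i < m) (r * \1_A (X i w) + s * \1_(~` A) (X i w)) =
    \sum_(t : {ffun 'I_m -> bool})
      (\prod_(i < m) c (t i)) * \1_(pattern_event A t) w.
  transitivity (\prod_(i < m) \sum_(j : bool)
      (c j * \1_(if j then A else ~` A) (X i w))).
    by apply: eq_bigr => i _; rewrite big_bool.
  rewrite bigA_distr_bigA /=; apply: eq_bigr => t _.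
  by rewrite big_split /= prod_indic.
under eq_integral do rewrite expand -sumEFin.
rewrite ge0_integral_sum//; first last.
- by move=> t w _; rewrite lee_fin mulr_ge0 ?prodr_ge0.
- move=> t; apply/measurable_EFinP; apply: measurable_funM => //.
  exact/measurable_indic/measurable_pattern_event.
transitivity (\sum_(t : {ffun 'I_m -> bool})
    ((\prod_(i < m) c (t i)) * \prod_(i < m) p (t i))%:E)%E.
  apply: eq_bigr => t _; under eq_integral do rewrite EFinM.
  rewrite ge0_integralZl_EFin ?prodr_ge0//; last first.
    exact/measurable_EFinP/measurable_indic/measurable_pattern_event.
  rewrite integral_indic ?setIT//=; last exact: measurable_pattern_event.
  rewrite EFinM /pattern_event (hX.2 (fun i => if t i then A else ~` A));
    last first.
    by move=> i; case: (t i) => //; exact: measurableC.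
  congr (_ * _)%E; rewrite -prodEFin; apply: eq_bigr => i _.
  by rewrite /p fineK// fin_num_measure//; case: (t i) => //; exact: measurableC.
rewrite sumEFin; congr (_%:E).
under eq_bigr do rewrite -big_split /=.
rewrite -(bigA_distr_bigA (fun (i : 'I_m) (j : bool) => c j * p j)) /=.
by rewrite prodr_const card_ord big_bool /= addrC.
Qed.

End iid_sample_two_valued.

Lemma bernoulli_mgf_le1 (R : realType) (t b p : R) :
  0 <= t -> 0 <= b -> t * (1 + b) <= b -> 0 <= p <= 1 ->
  expR (t * p) * (expR (- (t * (1 + b))) * p + (1 - p)) <= 1.
Proof.
move=> t0 b0 tb /andP[p0 p1]; set k := t * (1 + b).
have t1 : t <= 1 by nra.
(* This is where [t (1 + b) <= b] enters. *)
have ek : expR (- k) <= 1 - t.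
  have : 1 <= (1 - t) * expR k.
    have := expR_ge1Dx k; have : 1 <= (1 - t) * (1 + k) by rewrite /k; nra.
    nra.
  by rewrite expRN -[_^-1]mul1r ler_pdivrMr ?expR_gt0.
have : expR (- k) * p + (1 - p) <= expR (- (t * p)).
  by have := expR_ge1Dx (- (t * p)); nra.
by move/(ler_wpM2l (expR_ge0 (t * p))); rewrite -expRD addrN expR0.
Qed.

Section binary_loss.
Context {dZ dF : measure_display} {Z : measurableType dZ} {F : measurableType dF}
  {R : realType}.
Variables (D : probability Z R) (ev : F -> Z -> R).
Hypotheses (ev01 : forall f z, ev f z = 0 \/ ev f z = 1)
  (ev_meas : measurable_fun [set: F * Z] (fun p => ev p.1 p.2)).

Lemma ev_unit f z : 0 <= ev f z <= 1.
Proof. by case: (ev01 f z) => ->; rewrite lexx ler01. Qed.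

Lemma measurable_ev f : measurable_fun [set: Z] (ev f).
Proof. exact: (measurable_fun_pair2 (f := fun p => ev p.1 p.2) f ev_meas). Qed.

Lemma measurable_ev_at z : measurable_fun [set: F] (fun f => ev f z).
Proof. exact: (measurable_fun_pair1 (f := fun p => ev p.1 p.2) z ev_meas). Qed.

Lemma ev_indic f z : ev f z = \1_(ev f @^-1` [set 1]) z.
Proof.
rewrite indicE; case: (ev01 f z) => evz; last by rewrite mem_set.
by rewrite memNset// /= evz => /esym/eqP; rewrite oner_eq0.
Qed.

Definition risk f := \int[D]_z ev f z.

Lemma risk_unit f : 0 <= risk f <= 1.
Proof. exact: Rintegral01 (measurable_ev f) (ev_unit f). Qed.

Lemma measurable_risk : measurable_fun [set: F] risk.
Proof.
apply: (measurableT_comp (fine_measurable measurableT)).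
apply: (measurable_fun_fubini_tonelli_F (m2 := D)
  (fun q : F * Z => (ev q.1 q.2)%:E)).
- exact/measurable_EFinP.
- by move=> q; rewrite lee_fin; case/andP: (ev_unit q.1 q.2).
Qed.

Lemma LD_risk (Q : probability F R) : LD ev D Q = \int[Q]_f risk f.
Proof.
rewrite /LD; congr fine; apply: eq_integral => f _.
exact: integral01_Rintegral (measurable_ev f) (ev_unit f).
Qed.

Lemma varterm_ge_ellQ (Q : probability F R) (h : R) z : 0 < h -> h <= 1 ->
  h ^+ 2 * ellQ ev Q z <= varterm ev h Q z.
Proof.
move=> h0 h1.
have /andP[l0 l1] := Rintegral01 Q (measurable_ev_at z) (ev_unit ^~ z).
set l := ellQ ev Q z; set a := (1 + h) * l.
have ev_int := integrable01 Q (measurable_ev_at z) (ev_unit ^~ z).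
have -> : varterm ev h Q z = (1 - 2 * a) * l + a ^+ 2.
  rewrite -[LHS]/(\int[Q]_f (ev f z - a) ^+ 2).
  rewrite (@eq_Rintegral _ _ _ _ _ (fun f => (1 - 2 * a) * ev f z + a ^+ 2));
    last first.
    by move=> f _; case: (ev01 f z) => ->; ring.
  have int_lin : Q.-integrable [set: F] (EFin \o (fun f => (1 - 2 * a) * ev f z)).
    exact: eq_integrable (integrableZl measurableT (1 - 2 * a) ev_int).
  rewrite RintegralD//; last exact: finite_measure_integrable_cst.
  by rewrite RintegralZl// Rintegral_cst//= probability_setT mulr1.
rewrite -subr_ge0 /a.
have -> : (1 - 2 * ((1 + h) * l)) * l + ((1 + h) * l) ^+ 2 - h ^+ 2 * l =
  (1 - h ^+ 2) * (l * (1 - l)) by ring.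
have h2 : h ^+ 2 <= 1 by rewrite expr_le1// ltW.
by rewrite mulr_ge0 ?mulr_ge0 ?subr_ge0.
Qed.

Lemma integral_empirical_potential (Q : probability F R) (m : nat) (S : 'I_m -> Z)
    (lambda k : R) :
  0 <= lambda -> 0 <= k ->
  (\int[Q]_f (lambda * risk f + k * \sum_(i < m) (1 - ev f (S i)))%:E =
   (lambda * LD ev D Q + k * \sum_(i < m) (1 - ellQ ev Q (S i)))%:E)%E.
Proof.
move=> l0 k0.
have mev i := measurable_ev_at (S i).
have cev01 f i : 0 <= 1 - ev f (S i) <= 1.
  by have /andP[? ?] := ev_unit f (S i); apply/andP; split; lra.
have mcev i : measurable_fun [set: F] (fun f => 1 - ev f (S i)).
  exact: measurable_funB.
have risk0 f : 0 <= risk f by case/andP: (risk_unit f).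
under eq_integral do rewrite EFinD !EFinM.
rewrite ge0_integralD//; first last.
- apply: emeasurable_funM; first exact: measurable_cst.
  by apply/measurable_EFinP; apply: measurable_sum => i; exact: mcev.
- move=> f _; rewrite lee_fin mulr_ge0// sumr_ge0// => i _.
  by case/andP: (cev01 f i).
- apply: emeasurable_funM; first exact: measurable_cst.
  exact/measurable_EFinP/measurable_risk.
- by move=> f _; rewrite lee_fin mulr_ge0.
rewrite !ge0_integralZl_EFin//; first last.
- exact/measurable_EFinP/measurable_risk.
- by move=> f _; rewrite lee_fin.
- by apply/measurable_EFinP; exact: measurable_sum.
- by move=> f _; rewrite lee_fin sumr_ge0// => i _; case/andP: (cev01 f i).
rewrite LD_risk (integral01_Rintegral Q measurable_risk risk_unit).
under eq_integral do rewrite -sumEFin.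
rewrite ge0_integral_sum//; first last.
- by move=> i f _; rewrite lee_fin; case/andP: (cev01 f i).
- by move=> i; apply/measurable_EFinP.
rewrite EFinD !EFinM -sumEFin; congr (_ + _ * _)%E; apply: eq_bigr => i _.
exact: integral_onem (measurable_ev_at (S i)) (ev_unit ^~ (S i)).
Qed.

Lemma pac_bayes_change_of_measure (P Q : probability F R) (m : nat)
    (S : 'I_m -> Z) (lambda k kappa delta : R) :
  0 <= lambda -> 0 <= k -> 0 < delta -> (KL Q P <= kappa%:E)%E ->
  (\int[P]_f (expR (lambda * risk f - k * \sum_(i < m) ev f (S i)))%:E
     <= delta^-1%:E)%E ->
  lambda * LD ev D Q - k * \sum_(i < m) ellQ ev Q (S i) <= kappa - ln delta.
Proof.
move=> l0 k0 d0 KLQ intH.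
pose phi f := lambda * risk f - k * \sum_(i < m) ev f (S i).
have mphi : measurable_fun [set: F] phi.
  apply: measurable_funB; first exact: measurable_funM measurable_risk.
  apply: measurable_funM => //; apply: measurable_sum => i.
  exact: measurable_ev_at.
(* The exponent shifted by [k * m], written so that it is visibly nonnegative. *)
pose psi f := lambda * risk f + k * \sum_(i < m) (1 - ev f (S i)).
have psiE f : psi f = phi f + k * m%:R.
  by rewrite /psi /phi sumrB sumr_const card_ord; ring.
have psi0 f : 0 <= psi f.
  rewrite addr_ge0 ?mulr_ge0 ?sumr_ge0//; first by case/andP: (risk_unit f).
  by move=> i _; case/andP: (ev_unit f (S i)); rewrite subr_ge0.
have mpsi : measurable_fun [set: F] psi.
  apply: eq_measurable_fun (measurable_funD mphi (measurable_cst (k * m%:R))).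
  by move=> f _; rewrite psiE.
set H := (\int[P]_f _)%E in intH.
have HE : H = (fine H)%:E.
  by rewrite fineK// ge0_fin_numE ?integral_ge0 ?(le_lt_trans intH) ?ltry.
pose B := expR (k * m%:R) * fine H.
have hB : (\int[P]_f (expR (psi f))%:E = B%:E)%E.
  under eq_integral do rewrite psiE expRD mulrC EFinM.
  rewrite ge0_integralZl_EFin ?expR_ge0//; first by rewrite -/H {1}HE.
  exact/measurable_EFinP/measurableT_comp.
have lnB : ln B <= k * m%:R - ln delta.
  have B0 : 0 < B by exact: lt_le_trans ltr01 (integral_expR_ge1 mpsi psi0 hB).
  have HB : B <= expR (k * m%:R) * delta^-1.
    by rewrite ler_wpM2l ?expR_ge0// -lee_fin -HE.
  rewrite -(ler_ln (x := B)) ?posrE// in HB; last first.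
    by rewrite mulr_gt0 ?expR_gt0 ?invr_gt0.
  by rewrite lnM ?posrE ?expR_gt0 ?invr_gt0// expRK lnV ?posrE in HB.
have := le_trans (donsker_varadhan Q mpsi psi0 hB) KLQ.
rewrite integral_empirical_potential// -EFinB lee_fin sumrB sumr_const card_ord.
lra.
Qed.

End binary_loss.

Section iid_binary_loss.
Context {dZ dF dO : measure_display} {Z : measurableType dZ}
  {F : measurableType dF} {Omega : measurableType dO} {R : realType}.
Variables (D : probability Z R) (ev : F -> Z -> R).
Hypotheses (ev01 : forall f z, ev f z = 0 \/ ev f z = 1)
  (ev_meas : measurable_fun [set: F * Z] (fun p => ev p.1 p.2)).
Variables (Pr : probability Omega R) (m : nat) (X : 'I_m -> Omega -> Z).
Hypothesis hX : iid_sample Pr D X.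

Lemma empirical_mgf_le1 (t b : R) (f : F) :
  0 <= t -> 0 <= b -> t * (1 + b) <= b ->
  (\int[Pr]_w (expR (t * m%:R * risk D ev f
                     - t * (1 + b) * \sum_(i < m) ev f (X i w)))%:E <= 1)%E.
Proof.
move=> t0 b0 tb; set k := t * (1 + b); set A := ev f @^-1` [set 1].
have mA : measurable A.
  rewrite -[A]setTI; apply: (measurable_ev ev_meas) => //; exact: measurable_set1.
have riskA : risk D ev f = fine (D A).
  rewrite /risk (@eq_Rintegral _ _ _ _ _ \1_A) => [|z _]; last exact: ev_indic.
  by rewrite /Rintegral integral_indic// setIT.
have expand w : expR (t * m%:R * risk D ev f - k * \sum_(i < m) ev f (X i w)) =
    expR (t * risk D ev f) ^+ m *
    \prod_(i < m) (expR (- k) * \1_A (X i w) + 1 * \1_(~` A) (X i w)).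
  rewrite expRD mulrAC expRM_natr -mulNr mulr_sumr expR_sum; congr (_ * _).
  apply: eq_bigr => i _; rewrite (ev_indic ev01) !indicE in_setC.
  by case: (X i w \in A); rewrite ?mulr1 ?mulr0 ?expR0 /=; ring.
under eq_integral do rewrite expand EFinM.
rewrite ge0_integralZl_EFin ?exprn_ge0 ?expR_ge0//; first last.
- apply/measurable_EFinP; apply: measurable_prod => i _.
  apply: measurable_funD; apply: measurable_funM => //;
    apply: measurableT_comp (hX.1 i); apply: measurable_indic => //;
    exact: measurableC.
- by move=> w _; rewrite lee_fin prodr_ge0.
have DAC : fine (D (~` A)) = 1 - fine (D A).
  by rewrite probability_setC// -(fineK (fin_num_measure D A mA)).
rewrite (iid_integral_prod_indic hX) ?expR_ge0// -EFinM lee_fin -exprMn mul1r.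
have r01 := risk_unit D ev01 ev_meas f; have /andP[r0 r1] := r01.
rewrite DAC -riskA; apply: exprn_ile1; last exact: bernoulli_mgf_le1.
by rewrite mulr_ge0 ?expR_ge0// addr_ge0 ?mulr_ge0 ?expR_ge0// subr_ge0.
Qed.

Lemma measurable_empirical_exponent (lambda k : R) :
  measurable_fun [set: F * Omega] (fun q : F * Omega =>
    (expR (lambda * risk D ev q.1 - k * \sum_(i < m) ev q.1 (X i q.2)))%:E).
Proof.
apply/measurable_EFinP; apply: measurableT_comp => //; apply: measurable_funB.
  apply: measurable_funM => //.
  exact: measurableT_comp (measurable_risk D ev01 ev_meas) _.
apply: measurable_funM => //; apply: measurable_sum => i.
exact: (measurableT_comp (f := fun p : F * Z => ev p.1 p.2)
  (g := fun q : F * Omega => (q.1, X i q.2)) ev_meas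
  (measurable_fun_pair measurable_fst
    (measurableT_comp (hX.1 i) measurable_snd))).
Qed.

End iid_binary_loss.

Lemma step_size_le (R : realType) (t b c2 : R) : 0 <= t -> 0 < c2 -> c2 < b ->
  t <= (b - c2) / (2 * (1 + b) * (1 + c2)) -> t * (1 + b) <= b.
Proof.
move=> t0 c20 c2b; rewrite ler_pdivlMr; last by rewrite !mulr_gt0//; lra.
by nra.
Qed.

Lemma pac_bayes_rearrange (R : realType) (lambda M c h kappa delta L S V : R) :
  0 < lambda -> 0 < M -> 0 <= c -> 0 < kappa -> 0 < delta -> delta < 1 ->
  h ^+ 2 * S <= V ->
  lambda * L - lambda / M * (1 + h ^+ 2 * c) * S <= kappa - ln delta ->
  L - S / M - c / M * V <= 4 / lambda * (kappa + ln (4 / delta)).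
Proof.
move=> l0 M0 c0 k0 d0 d1 SV CM; set t := lambda / M in CM *.
have tc0 : 0 <= t * c by rewrite mulr_ge0// divr_ge0// ltW.
have tcV : t * c * (h ^+ 2 * S) <= t * c * V by exact: ler_wpM2l.
have lnd : ln delta <= 0 by rewrite ln_le0// ltW.
have ln4 : 0 <= ln (4 : R) by rewrite ln_ge0//; lra.
have -> : ln (4 / delta) = ln 4 - ln delta.
  by rewrite lnM ?posrE ?invr_gt0// lnV ?posrE.
rewrite [leRHS]mulrAC ler_pdivlMr// mulrC.
have -> : lambda * (L - S / M - c / M * V) = lambda * L - t * S - t * c * V.
  by rewrite /t; ring.
lra.
Qed.

Theorem mainTheorem3 (R : realType)
  (dZ : measure_display) (Z : measurableType dZ) (D : probability Z R)
  (dF : measure_display) (F : measurableType dF) (ev : F -> Z -> R)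
  (ev01 : forall f z, ev f z = 0 \/ ev f z = 1)
  (ev_inj : injective ev)
  (ev_meas : measurable_fun [set: F * Z] (fun p => ev p.1 p.2))
  (P : probability F R) (c h c2 kappa delta lambda : R) (m : nat)
  (hc : 0 < c) (hh0 : 0 < h) (hh1 : h <= 1)
  (hc2 : 0 < c2) (hc2' : c2 < h ^+ 2 * c)
  (hkappa : 0 < kappa) (hd0 : 0 < delta) (hd1 : delta < 1)
  (hm : (1 <= m)%N) (hl : 0 < lambda)
  (hlm : lambda / m%:R <=
     Num.min ((h ^+ 2 * c - c2) / (2 * (1 + h ^+ 2 * c) * (1 + c2)))
             ((4 * c2 * h ^+ 2) / ((1 + c2) * (1 + c2 * h ^+ 2))
                * (kappa + ln (4 / delta))))
  (dO : measure_display) (Omega : measurableType dO)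
  (Pr : probability Omega R) (X : 'I_m -> Omega -> Z)
  (hX : iid_sample Pr D X) :
  exists E : set Omega,
    [/\ measurable E, ((1 - delta)%:E <= Pr E)%E &
      forall w, E w ->
      forall Q : probability F R, (KL Q P <= kappa%:E)%E ->
        LD ev D Q - Lhat ev Q (fun i => X i w)
          - c / m%:R * \sum_(i < m) varterm ev h Q (X i w)
        <= 4 / lambda * (kappa + ln (4 / delta))].
Proof.
set b := h ^+ 2 * c; set t := lambda / m%:R; set k := t * (1 + b).
have m0 : 0 < m%:R :> R by rewrite ltr0n.
have t0 : 0 < t by rewrite divr_gt0.
have b0 : 0 <= b by rewrite /b mulr_ge0 ?sqr_ge0 ?ltW.
have tb : t * (1 + b) <= b.
  apply: step_size_le (ltW t0) hc2 hc2' _.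
  by move: hlm; rewrite le_min => /andP[].
have lamE : lambda = t * m%:R by rewrite /t divfK ?gt_eqF.
pose G q :=
  (expR (lambda * risk D ev q.1 - k * \sum_(i < m) ev q.1 (X i q.2)))%:E.
have mgf_le1 f : (\int[Pr]_w G (f, w) <= 1)%E.
  by rewrite /G lamE; exact: (empirical_mgf_le1 ev01 ev_meas hX) (ltW t0) b0 tb.
have [E [mE PrE HE]] := tonelli_markov P
  (measurable_empirical_exponent ev01 ev_meas hX lambda k)
  (fun q => expR_ge0 _) hd0 mgf_le1.
exists E; split => // w Ew Q KLQ.
have k0 : 0 <= k by apply: mulr_ge0 (ltW t0) (addr_ge0 ler01 b0).
have change_measure := pac_bayes_change_of_measure ev01 ev_meas (S := X^~ w)
  (ltW hl) k0 hd0 KLQ (HE w Ew).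
have var_ge : h ^+ 2 * \sum_(i < m) ellQ ev Q (X i w) <=
    \sum_(i < m) varterm ev h Q (X i w).
  by rewrite mulr_sumr; apply: ler_sum => i _; exact: varterm_ge_ellQ.
exact: pac_bayes_rearrange hl m0 (ltW hc) hkappa hd0 hd1 var_ge change_measure.
Qed.
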